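(* Consider the voting game described in the context with complete information (all voters' types are common knowledge). Under liquid democracy there exists a best equilibrium (in terms of information aggregation) $\sigma$, and the probability that the election outcome matches the state under $\sigma$ is at least as large as under the best equilibrium of direct democracy and at least as large as under the best equilibrium of representative democracy.
   Context: Voters $\mathcal N=\{1,\dots,N\}$ choose between alternatives $A$ and $B$; the alternative receiving a simple majority of the votes cast wins, ties broken uniformly at random. There is an unknown state $\omega\in\{a,b\}$ with common prior $\Pr(\omega=a)=\pi\in(0,1)$. Each voter $i$ has a type $t_i=(p_i,q_i)$ with preference $p_i\in\{A,B,I\}$ and precision $q_i\in[1/2,1]$. An independent voter ($p_i=I$) gets payoff $1$ if the outcome is $A$ and $\omega=a$ or the outcome is $B$ and $\omega=b$, and $0$ otherwise; a partisan with $p_i=A$ (resp. $p_i=B$) gets payoff $1$ iff the outcome is $A$ (resp. $B$), else $0$. Each voter $i$ observes a private signal $s_i\in\{a,b\}$ with $\Pr(s_i=\omega\mid\omega)=q_i$, signals independent conditional on $\omega$. A (pure interim) strategy of voter $i$ maps her signal to an action. Direct democracy (DD): actions are $a$ (vote for $A$), $b$ (vote for $B$), $x$ (abstain). Liquid democracy (LD): additionally $d_j$ (delegate to voter $j\neq i$); delegation is transitive (votes held by a delegator pass on to whomever she delegates to), all votes held by voters in a delegation cycle are abstained, and a voter who does not delegate casts all votes she holds (her own plus those delegated to her) for the alternative she chooses or abstains all of them. Representative democracy (RD): there is a fixed set of representatives $\mathcal J$ consisting of some subset of $\mathcal N$ together with two non-strategic representatives $a^*,b^*\notin\mathcal N$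 who always vote for $A$ and $B$ respectively; a representative in $\mathcal N$ chooses among $a,b,x$, and a non-representative chooses between abstaining and delegating to some representative in $\mathcal J$. An equilibrium is a Bayes Nash equilibrium in which no voter uses a weakly dominated strategy. An equilibrium is a best equilibrium (in terms of information aggregation) if it maximizes, among equilibria of the mechanism, the probability that the outcome matches the state (outcome $A$ when $\omega=a$, outcome $B$ when $\omega=b$). *)

From mathcomp Require Import all_boot all_order all_algebra.
Set Implicit Arguments. Unset Strict Implicit. Unset Printing Implicit Defensive.
Import Order.TTheory GRing.Theory Num.Theory.
Local Open Scope ring_scope.

(* Preference of a voter: partisan for A, partisan for B, or independent. *)
Inductive pref := PrefA | PrefB | PrefI.

(* States and signals are booleans: true = a, false = b. *)

(* Probability that A wins, given the numbers of votes for A and for B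
   (simple majority, ties broken uniformly at random). *)
Definition winprob {R : realFieldType} (nA nB : nat) : R :=
  if (nB < nA)%N then 1 else if (nA < nB)%N then 0 else 1 / 2%:R.

Inductive ldact (N : nat) :=
  | LVoteA | LVoteB | LAbstain | LDelegate of 'I_N.
Arguments LVoteA {N}. Arguments LVoteB {N}. Arguments LAbstain {N}.

Definition ld_next N (act : 'I_N -> ldact N) (i : 'I_N) : 'I_N :=
  match act i with LDelegate j => j | _ => i end.
(* after N steps a chain has either reached a non-delegating voter
   (its "guru") or is trapped in a delegation cycle *)
Definition ld_final N (act : 'I_N -> ldact N) (i : 'I_N) : 'I_N :=
  iter N (ld_next act) i.
(* does voter i's own vote end up cast for A (resp. B)?  Votes reaching a
   cycle end at a delegating voter and are thus abstained. *)
Definition ld_forA N (act : 'I_N -> ldact N) (i : 'I_N) : bool :=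
  if act (ld_final act i) is LVoteA then true else false.
Definition ld_forB N (act : 'I_N -> ldact N) (i : 'I_N) : bool :=
  if act (ld_final act i) is LVoteB then true else false.
Definition ld_winA {R : realFieldType} N (act : 'I_N -> ldact N) : R :=
  winprob #|[pred i | ld_forA act i]| #|[pred i | ld_forB act i]|.

Definition ld_valid N (i : 'I_N) (x : ldact N) : bool :=
  if x is LDelegate j then j != i else true.
Definition dd_valid N (i : 'I_N) (x : ldact N) : bool :=
  if x is LDelegate _ then false else true.

(* RDelA / RDelB: delegate to the non-strategic representatives a*, b* *)
Inductive rdact (N : nat) :=
  | RVoteA | RVoteB | RAbstain | RDelegate of 'I_N | RDelA | RDelB.
Arguments RVoteA {N}. Arguments RVoteB {N}. Arguments RAbstain {N}.
Arguments RDelA {N}. Arguments RDelB {N}.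

Definition rd_valid N (J : {set 'I_N}) (i : 'I_N) (x : rdact N) : bool :=
  if i \in J then
    match x with RVoteA | RVoteB | RAbstain => true | _ => false end
  else
    match x with
    | RAbstain | RDelA | RDelB => true
    | RDelegate j => j \in J
    | _ => false
    end.
Definition rd_forA N (act : 'I_N -> rdact N) (i : 'I_N) : bool :=
  match act i with
  | RVoteA | RDelA => true
  | RDelegate j => if act j is RVoteA then true else false
  | _ => false
  end.
Definition rd_forB N (act : 'I_N -> rdact N) (i : 'I_N) : bool :=
  match act i with
  | RVoteB | RDelB => true
  | RDelegate j => if act j is RVoteB then true else false
  | _ => false
  end.
Definition rd_winA {R : realFieldType} N (act : 'I_N -> rdact N) : R :=
  winprob #|[pred i | rd_forA act i]| #|[pred i | rd_forB act i]|.

Section Game.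
Variables (R : realFieldType) (N : nat) (p : 'I_N -> pref) (q : 'I_N -> R)
          (pi : R).
Variables (Act : Type) (valid : 'I_N -> Act -> bool)
          (winA : ('I_N -> Act) -> R).

Definition prior (w : bool) : R := if w then pi else 1 - pi.
Definition lik (s : {ffun 'I_N -> bool}) (w : bool) : R :=
  \prod_(i < N) (if s i == w then q i else 1 - q i).

Definition payoff (pr : pref) (w : bool) (x : R) : R :=
  match pr with
  | PrefA => x
  | PrefB => 1 - x
  | PrefI => if w then x else 1 - x
  end.

(* pure interim strategy profile: each voter maps her signal to an action *)
Definition profile := 'I_N -> bool -> Act.

Definition eu (i : 'I_N) (sg : profile) : R :=
  \sum_(w : bool) \sum_(s : {ffun 'I_N -> bool})
     prior w * lik s w * payoff (p i) w (winA (fun j => sg j (s j))).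

Definition pcorrect (sg : profile) : R :=
  \sum_(w : bool) \sum_(s : {ffun 'I_N -> bool})
     prior w * lik s w * payoff PrefI w (winA (fun j => sg j (s j))).

Definition valid_strat (i : 'I_N) (t : bool -> Act) := forall b, valid i (t b).
Definition valid_prof (sg : profile) := forall i, valid_strat i (sg i).
Definition upd (sg : profile) (i : 'I_N) (t : bool -> Act) : profile :=
  fun j => if j == i then t else sg j.

Definition is_BNE (sg : profile) :=
  valid_prof sg /\
  forall i t, valid_strat i t -> eu i (upd sg i t) <= eu i sg.

Definition weakly_dominated (i : 'I_N) (t : bool -> Act) :=
  exists t', valid_strat i t' /\
    (forall sg, valid_prof sg -> eu i (upd sg i t) <= eu i (upd sg i t')) /\
    (exists sg, valid_prof sg /\ eu i (upd sg i t) < eu i (upd sg i t')).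

Definition is_equilibrium (sg : profile) :=
  is_BNE sg /\ forall i, ~ weakly_dominated i (sg i).
End Game.

From HB Require Import structures.
From mathcomp Require Import all_boot all_order all_algebra.
From mathcomp Require Import lra zify.
From Stdlib Require Import Classical FunctionalExtensionality.
Set Implicit Arguments. Unset Strict Implicit. Unset Printing Implicit Defensive.
Import Order.TTheory GRing.Theory Num.Theory.
Local Open Scope ring_scope.

(* Voting for one's own side weakly raises the probability that this side wins
   against every profile, and strictly so when everybody else abstains; so in
   every equilibrium of DD, LD or RD the partisans vote sincerely.  Reading a
   delegation to a* or b* as a direct vote, every such equilibrium becomes a
   valid LD profile with sincere partisans and the same outcome.  Among these
   finitely many profiles pick one maximising the probability of a correct
   outcome, and among those one maximising the total score of the
   independents' strategies against all profiles.  Independents are paid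
   exactly when the outcome is correct, so the first choice makes the profile
   a Nash equilibrium; switching to a weakly dominating strategy would keep
   that probability and raise the score, so the second choice rules out
   weakly dominated strategies. *)

Lemma winprob_mono (R : realFieldType) nA nB nA' nB' :
  (nA <= nA')%N -> (nB' <= nB)%N -> winprob nA nB <= winprob nA' nB' :> R.
Proof.
move=> hA hB; have half_gt0 : 0 < 1 / 2%:R :> R by lra.
rewrite /winprob; repeat case: ifP => ?; try lra; lia.
Qed.

Lemma winprob_0l_lt_0r (R : realFieldType) nA nB :
  (0 < nA + nB)%N -> winprob 0 nB < winprob nA 0 :> R.
Proof.
move=> hpos; have half_gt0 : 0 < 1 / 2%:R :> R by lra.
rewrite /winprob; repeat case: ifP => ?; try lra; lia.
Qed.

Lemma ler_sum_lt (R : numDomainType) (I : finType) (P : pred I) (F G : I -> R) i0 :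
  (forall i, P i -> F i <= G i) -> P i0 -> F i0 < G i0 ->
  \sum_(i | P i) F i < \sum_(i | P i) G i.
Proof.
move=> hle Pi0 hlt; rewrite (bigD1 i0) //= [ltRHS](bigD1 i0) //=.
by apply: ltr_leD => //; apply: ler_sum => i /andP[Pi _]; apply: hle.
Qed.

Lemma iter_step_fix (T : Type) (f : T -> T) n x y :
  (0 < n)%N -> f x = y -> f y = y -> iter n f x = y.
Proof. by case: n => // n _ hxy hy; rewrite iterSr hxy iter_fix. Qed.

Definition set_act N (Act : Type) (act : 'I_N -> Act) (i : 'I_N) (a : Act) : 'I_N -> Act :=
  fun j => if j == i then a else act j.

Lemma set_act_valid N (Act : Type) (valid : 'I_N -> Act -> bool) act i a :
  (forall j, valid j (act j)) -> valid i a -> forall j, valid j (set_act act i a j).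
Proof. by move=> hact ha j; rewrite /set_act; case: eqP => [->|]. Qed.

Lemma map_set_act N (Act Act' : Type) (f : Act -> Act') (act : 'I_N -> Act) i a :
  (fun j => f (set_act act i a j)) = set_act (fun j => f (act j)) i (f a).
Proof. by apply: functional_extensionality => j; rewrite /set_act; case: eqP. Qed.

Lemma upd_id N (Act : Type) (sg : profile N Act) i : upd sg i (sg i) = sg.
Proof. by apply: functional_extensionality => j; rewrite /upd; case: eqP => [->|]. Qed.

Section Weights.
Variables (R : realFieldType) (N : nat) (q : 'I_N -> R) (pi : R).
Hypothesis hpi : 0 < pi < 1.
Hypothesis hq : forall i, 1 / 2%:R <= q i <= 1.

Lemma prior_gt0 w : 0 < prior pi w.
Proof. by case/andP: hpi => ? ?; case: w => /=; lra. Qed.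

Lemma lik_ge0 s w : 0 <= lik q s w.
Proof. by apply: prodr_ge0 => i _; have /andP[? ?] := hq i; case: ifP => _; lra. Qed.

Lemma lik_const_gt0 w : 0 < lik q [ffun=> w] w.
Proof. by apply: prodr_gt0 => i _; have /andP[? ?] := hq i; rewrite ffunE eqxx; lra. Qed.

Section Payoffs.
Variables (p : 'I_N -> pref) (Act : Type) (winA : ('I_N -> Act) -> R).

Definition outcome (sg : profile N Act) (s : {ffun 'I_N -> bool}) : R :=
  winA (fun j => sg j (s j)).

Lemma eu_le i sg sg' :
  (forall w s, payoff (p i) w (outcome sg s) <= payoff (p i) w (outcome sg' s)) ->
  eu p q pi winA i sg <= eu p q pi winA i sg'.
Proof.
move=> hle; apply: ler_sum => w _; apply: ler_sum => s _; apply: ler_wpM2l; last exact: hle.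
by apply: mulr_ge0; [exact/ltW/prior_gt0 | exact: lik_ge0].
Qed.

Lemma eu_lt i sg sg' w :
  (forall w s, payoff (p i) w (outcome sg s) <= payoff (p i) w (outcome sg' s)) ->
  payoff (p i) w (outcome sg [ffun=> w]) < payoff (p i) w (outcome sg' [ffun=> w]) ->
  eu p q pi winA i sg < eu p q pi winA i sg'.
Proof.
move=> hle hlt; have weight_ge0 w' s : 0 <= prior pi w' * lik q s w'.
  by apply: mulr_ge0; [exact/ltW/prior_gt0 | exact: lik_ge0].
apply: (ler_sum_lt (i0 := w)) => // [w' _|].
  by apply: ler_sum => s _; apply: ler_wpM2l; last exact: hle.
apply: (ler_sum_lt (i0 := [ffun=> w])) => // [s _|].
  by apply: ler_wpM2l; last exact: hle.
by rewrite ltr_pM2l // mulr_gt0 ?prior_gt0 ?lik_const_gt0.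
Qed.

End Payoffs.
End Weights.

Section PartisansVoteSincerely.
Variables (R : realFieldType) (N : nat) (p : 'I_N -> pref) (q : 'I_N -> R) (pi : R).
Hypothesis hpi : 0 < pi < 1.
Hypothesis hq : forall i, 1 / 2%:R <= q i <= 1.
Variables (Act : Type) (valid : 'I_N -> Act -> bool) (winA : ('I_N -> Act) -> R).
Variables (abst : Act) (own : 'I_N -> Act).
Hypothesis abst_valid : forall i, valid i abst.
Hypothesis own_valid : forall i, valid i (own i).
Hypothesis own_ge : forall act i w, p i <> PrefI -> (forall j, valid j (act j)) ->
  payoff (p i) w (winA act) <= payoff (p i) w (winA (set_act act i (own i))).
Hypothesis own_gt : forall i x w, p i <> PrefI -> valid i x -> x <> own i ->
  payoff (p i) w (winA (set_act (fun _ => abst) i x)) <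
  payoff (p i) w (winA (set_act (fun _ => abst) i (own i))).

Notation EU := (eu p q pi winA).

Lemma outcome_upd_const (sg : profile N Act) i t a s :
  outcome winA (upd sg i (fun _ => a)) s = winA (set_act (fun j => upd sg i t j (s j)) i a).
Proof. by congr winA; apply: functional_extensionality => j; rewrite /upd /set_act; case: eqP. Qed.

Lemma eu_own_ge i sg t : p i <> PrefI -> valid_prof valid sg -> valid_strat valid i t ->
  EU i (upd sg i t) <= EU i (upd sg i (fun _ => own i)).
Proof.
move=> hp hsg ht; apply: eu_le => // w s; rewrite (outcome_upd_const _ _ t).
by apply: own_ge => // j; rewrite /upd; case: eqP => [->|_]; [exact: ht | exact: hsg].
Qed.

Lemma own_undominated i : p i <> PrefI -> ~ weakly_dominated p q pi valid winA i (fun _ => own i).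
Proof.
move=> hp [t' [ht' [_ [sg [hsg hlt]]]]].
by have := eu_own_ge hp hsg ht'; lra.
Qed.

Lemma equilibrium_own tau i b :
  is_equilibrium p q pi valid winA tau -> p i <> PrefI -> tau i b = own i.
Proof.
move=> [[htau _] hundom] hp; apply: NNPP => hne; apply: (hundom i).
pose sg0 : profile N Act := fun _ _ => abst.
have sg0_valid : valid_prof valid sg0 by move=> j ?; exact: abst_valid.
exists (fun _ => own i); split; first by move=> ?; exact: own_valid.
split; first by move=> sg hsg; exact: eu_own_ge.
exists sg0; split => //; apply: (eu_lt hpi hq (w := b)).
  move=> w s; rewrite (outcome_upd_const _ _ (tau i)).
  by apply: own_ge => // j; rewrite /upd; case: eqP => [->|_]; [exact: htau | exact: abst_valid].
have outcome_sg0 t : outcome winA (upd sg0 i t) [ffun=> b] = winA (set_act (fun _ => abst) i (t b)).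
  by congr winA; apply: functional_extensionality => j; rewrite /upd /set_act ffunE; case: eqP.
by rewrite !outcome_sg0; exact: own_gt (htau i b) hne.
Qed.

End PartisansVoteSincerely.

Definition ldact_code N (x : ldact N) : option (option (option 'I_N)) :=
  match x with
  | LVoteA => None | LVoteB => Some None | LAbstain => Some (Some None)
  | LDelegate j => Some (Some (Some j))
  end.
Definition code_ldact N (c : option (option (option 'I_N))) : ldact N :=
  match c with
  | None => LVoteA | Some None => LVoteB | Some (Some None) => LAbstain
  | Some (Some (Some j)) => LDelegate j
  end.
Lemma ldact_codeK N : cancel (@ldact_code N) (@code_ldact N).
Proof. by case. Qed.
HB.instance Definition _ N := Finite.copy (ldact N) (can_type (@ldact_codeK N)).

Section LiquidDelegation.
Variable N : nat.
Implicit Types (act : 'I_N -> ldact N) (i j k : 'I_N) (a x : ldact N).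

Definition casts a : bool := if a is LDelegate _ then false else true.

Lemma iter_ld_next_set act i a k n : casts a ->
  iter n (ld_next (set_act act i a)) k = i \/
  iter n (ld_next (set_act act i a)) k = iter n (ld_next act) k /\ iter n (ld_next act) k != i.
Proof.
move=> ha; elim: n => [|n IHn] /=; first by case: (eqVneq k i); [left | right].
case: IHn => [-> | [-> hne]].
  by left; rewrite /ld_next /set_act eqxx; case: a ha.
have -> : ld_next (set_act act i a) (iter n (ld_next act) k) = ld_next act (iter n (ld_next act) k).
  by rewrite /ld_next /set_act (negbTE hne).
by case: (eqVneq (ld_next act (iter n (ld_next act) k)) i); [left | right].
Qed.

(* A casting voter [i] absorbs every delegation chain through her and leaves
   the other chains unchanged. *)
Lemma ld_cast_set act i a k : casts a ->
  set_act act i a (ld_final (set_act act i a) k) = a \/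
  set_act act i a (ld_final (set_act act i a) k) = act (ld_final act k).
Proof.
move=> ha; rewrite /ld_final; case: (iter_ld_next_set act i k N ha) => [-> | [-> hne]].
  by left; rewrite /set_act eqxx.
by right; rewrite /set_act (negbTE hne).
Qed.

Lemma ld_final_next act k j : ld_next act k = j -> casts (act j) -> ld_final act k = j.
Proof.
move=> hkj hj; apply: iter_step_fix hkj _; first exact: leq_ltn_trans (ltn_ord k).
by rewrite /ld_next; case: (act j) hj.
Qed.

Lemma ld_winA_le (R : realFieldType) act act' :
  (forall k, ld_forA act k -> ld_forA act' k) -> (forall k, ld_forB act' k -> ld_forB act k) ->
  ld_winA act <= ld_winA act' :> R.
Proof.
by move=> hA hB; apply: winprob_mono; apply: subset_leq_card; apply/subsetP => k; rewrite !inE;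
  [exact: hA | exact: hB].
Qed.

Lemma ld_winA_voteA (R : realFieldType) act i : ld_winA act <= ld_winA (set_act act i LVoteA) :> R.
Proof.
apply: ld_winA_le => k; rewrite /ld_forA /ld_forB;
  by case: (ld_cast_set act i k (isT : casts LVoteA)) => ->.
Qed.

Lemma ld_winA_voteB (R : realFieldType) act i : ld_winA (set_act act i LVoteB) <= ld_winA act :> R.
Proof.
apply: ld_winA_le => k; rewrite /ld_forA /ld_forB;
  by case: (ld_cast_set act i k (isT : casts LVoteB)) => ->.
Qed.

Lemma ld_winA_single (R : realFieldType) i x :
  ld_winA (set_act (fun _ => LAbstain) i x) = winprob (x == LVoteA) (x == LVoteB) :> R.
Proof.
have final_self (v : ldact N) k : casts v -> ld_final (set_act (fun _ => LAbstain) i v) k = k.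
  by move=> hv; apply: ld_final_next; rewrite /ld_next /set_act; case: eqP => // _; case: v hv.
rewrite /ld_winA; congr winprob.
- have [-> | hx] := eqVneq x LVoteA.
    rewrite -[nat_of_bool true](card1 i); apply: eq_card => k; rewrite !inE /ld_forA final_self //.
    by rewrite /set_act; case: eqP.
  by apply: eq_card0 => k; rewrite inE /ld_forA /set_act; case: eqP => // _; case: x hx.
- have [-> | hx] := eqVneq x LVoteB.
    rewrite -[nat_of_bool true](card1 i); apply: eq_card => k; rewrite !inE /ld_forB final_self //.
    by rewrite /set_act; case: eqP.
  by apply: eq_card0 => k; rewrite inE /ld_forB /set_act; case: eqP => // _; case: x hx.
Qed.

Definition sincere_vote (pr : pref) : ldact N :=
  match pr with PrefA => LVoteA | PrefB => LVoteB | PrefI => LAbstain end.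

Lemma payoff_sincere_ge (R : realFieldType) pr w act i : pr <> PrefI ->
  payoff pr w (ld_winA act) <= payoff pr w (ld_winA (set_act act i (sincere_vote pr))) :> R.
Proof.
by case: pr => //= _; [exact: ld_winA_voteA | rewrite lerD2l lerN2; exact: ld_winA_voteB].
Qed.

Lemma payoff_sincere_gt (R : realFieldType) pr w i x : pr <> PrefI -> x <> sincere_vote pr ->
  payoff pr w (ld_winA (set_act (fun _ => LAbstain) i x)) <
  payoff pr w (ld_winA (set_act (fun _ => LAbstain) i (sincere_vote pr))) :> R.
Proof.
rewrite !ld_winA_single; case: pr => //= _ /eqP/negbTE hx.
  by rewrite hx; apply: winprob_0l_lt_0r.
by rewrite ltrD2l ltrN2 hx /=; apply: winprob_0l_lt_0r; rewrite addn1.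
Qed.

End LiquidDelegation.

Arguments sincere_vote {N}.

Section RepresentativeAsLiquid.
Variables (N : nat) (J : {set 'I_N}).
Implicit Types (act : 'I_N -> rdact N) (i j k : 'I_N) (x y : rdact N).

(* Delegating to the non-strategic representative [a*] (resp. [b*]) has the
   same effect as voting for [A] (resp. [B]) oneself. *)
Definition ld_of_rd x : ldact N :=
  match x with
  | RVoteA | RDelA => LVoteA
  | RVoteB | RDelB => LVoteB
  | RAbstain => LAbstain
  | RDelegate j => LDelegate j
  end.

Definition rd_sincere_vote i (pr : pref) : rdact N :=
  match pr with
  | PrefA => if i \in J then RVoteA else RDelA
  | PrefB => if i \in J then RVoteB else RDelB
  | PrefI => RAbstain
  end.

Lemma rd_abstain_valid i : rd_valid J i RAbstain.
Proof. by rewrite /rd_valid; case: (i \in J). Qed.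

Lemma rd_sincere_vote_valid i pr : rd_valid J i (rd_sincere_vote i pr).
Proof. by rewrite /rd_valid /rd_sincere_vote; case: (i \in J); case: pr. Qed.

Lemma ld_of_rd_sincere i pr : ld_of_rd (rd_sincere_vote i pr) = sincere_vote pr.
Proof. by rewrite /rd_sincere_vote; case: pr; case: (i \in J). Qed.

Lemma ld_of_rd_valid i x : rd_valid J i x -> ld_valid i (ld_of_rd x).
Proof.
rewrite /rd_valid; case: x => //= j; case hi: (i \in J) => // hj.
by apply: contraTneq hj => ->; rewrite hi.
Qed.

Lemma ld_of_rd_inj i x y : rd_valid J i x -> rd_valid J i y -> ld_of_rd x = ld_of_rd y -> x = y.
Proof.
rewrite /rd_valid; case: (i \in J) => hx hy;
  case: x hx => [||| j ||]; case: y hy => [||| k ||] //= _ _; by case=> ->.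
Qed.

Lemma rd_forAB_ld act k : (forall j, rd_valid J j (act j)) ->
  rd_forA act k = ld_forA (fun j => ld_of_rd (act j)) k /\
  rd_forB act k = ld_forB (fun j => ld_of_rd (act j)) k.
Proof.
move=> hv; set lact := fun j => ld_of_rd (act j).
rewrite /rd_forA /rd_forB /ld_forA /ld_forB.
have := hv k; rewrite /rd_valid; case hk: (act k) => [||| j ||] /=;
  try by rewrite (@ld_final_next _ lact k k) /lact /ld_next hk.
case: ifP => // _ hj; move: (hv j); rewrite /rd_valid hj => hvj.
by rewrite (@ld_final_next _ lact k j) /lact /ld_next ?hk //; case: (act j) hvj.
Qed.

Lemma rd_winA_ld (R : realFieldType) act : (forall j, rd_valid J j (act j)) ->
  rd_winA act = ld_winA (fun j => ld_of_rd (act j)) :> R.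
Proof.
move=> hv; rewrite /rd_winA /ld_winA; congr winprob; apply: eq_card => k; rewrite !inE;
  by have [hA hB] := rd_forAB_ld k hv; rewrite ?hA ?hB.
Qed.

End RepresentativeAsLiquid.

Section EquilibriaAreSincere.
Variables (R : realFieldType) (N : nat) (p : 'I_N -> pref) (q : 'I_N -> R) (pi : R).
Hypothesis hpi : 0 < pi < 1.
Hypothesis hq : forall i, 1 / 2%:R <= q i <= 1.

Definition sincere (sg : profile N (ldact N)) : Prop :=
  valid_prof (@ld_valid N) sg /\ forall i b, p i <> PrefI -> sg i b = sincere_vote (p i).

Lemma equilibrium_casting_sincere (valid : 'I_N -> ldact N -> bool) tau i b :
  (forall i x, casts x -> valid i x) ->
  is_equilibrium p q pi valid (@ld_winA R N) tau -> p i <> PrefI -> tau i b = sincere_vote (p i).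
Proof.
move=> hcast.
apply: (equilibrium_own hpi hq (abst := LAbstain) (own := fun j => sincere_vote (p j)))
  => [j | j | act j w hp _ | j x w hp _].
- exact: hcast.
- by apply: hcast; case: (p j).
- exact: payoff_sincere_ge.
- exact: payoff_sincere_gt.
Qed.

Lemma ld_equilibrium_sincere tau :
  is_equilibrium p q pi (@ld_valid N) (@ld_winA R N) tau -> sincere tau.
Proof.
move=> htau; split; first by case: htau => [[]].
by move=> i b; apply: equilibrium_casting_sincere htau => j [].
Qed.

Lemma dd_equilibrium_sincere tau :
  is_equilibrium p q pi (@dd_valid N) (@ld_winA R N) tau -> sincere tau.
Proof.
move=> htau; split; last by move=> i b; apply: equilibrium_casting_sincere htau => j [].
by case: htau => [[hv _] _] i b; case: (tau i b) (hv i b).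
Qed.

Lemma rd_equilibrium_sincere J tau :
  is_equilibrium p q pi (rd_valid J) (@rd_winA R N) tau ->
  sincere (fun i b => ld_of_rd (tau i b)).
Proof.
move=> htau; have [[hv _] _] := htau.
split=> [i b | i b hp]; first exact/ld_of_rd_valid/hv.
rewrite -(ld_of_rd_sincere J i); congr ld_of_rd.
apply: (equilibrium_own hpi hq (abst := RAbstain) (own := fun j => rd_sincere_vote J j (p j)))
  htau hp => [j | j | act j w hp' hact | j x w hp' hx hne].
- exact: rd_abstain_valid.
- exact: rd_sincere_vote_valid.
- rewrite (rd_winA_ld _ hact) (rd_winA_ld _ (set_act_valid hact (rd_sincere_vote_valid J j _))).
  by rewrite map_set_act ld_of_rd_sincere; apply: payoff_sincere_ge.
- have hv0 := fun j => rd_abstain_valid J j.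
  rewrite (rd_winA_ld _ (set_act_valid hv0 hx)).
  rewrite (rd_winA_ld _ (set_act_valid hv0 (rd_sincere_vote_valid J j _))).
  rewrite !map_set_act ld_of_rd_sincere; apply: payoff_sincere_gt => // heq.
  by apply/hne/(ld_of_rd_inj hx (rd_sincere_vote_valid _ _ _)); rewrite ld_of_rd_sincere.
Qed.

Lemma rd_pcorrect_ld J tau : valid_prof (rd_valid J) tau ->
  pcorrect q pi (@rd_winA R N) tau = pcorrect q pi (@ld_winA R N) (fun i b => ld_of_rd (tau i b)).
Proof.
move=> hv; apply: eq_bigr => w _; apply: eq_bigr => s _.
by rewrite (rd_winA_ld _ (fun j => hv j (s j))).
Qed.

End EquilibriaAreSincere.

Section BestSincereEquilibrium.
Variables (R : realFieldType) (N : nat) (p : 'I_N -> pref) (q : 'I_N -> R) (pi : R).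
Hypothesis hpi : 0 < pi < 1.
Hypothesis hq : forall i, 1 / 2%:R <= q i <= 1.

Notation W := (@ld_winA R N).
Notation EU := (eu p q pi W).
Notation PC := (pcorrect q pi W).
Notation sincere := (sincere p).

Definition ld_table := {ffun 'I_N -> {ffun bool -> ldact N}}.
Definition profile_of (c : ld_table) : profile N (ldact N) := fun i b => c i b.
Definition table_of (sg : profile N (ldact N)) : ld_table := [ffun i => [ffun b => sg i b]].

Lemma table_ofK sg : profile_of (table_of sg) = sg.
Proof.
apply: functional_extensionality => i; apply: functional_extensionality => b.
by rewrite /profile_of !ffunE.
Qed.

Definition valid_table (c : ld_table) : bool := [forall i, forall b, ld_valid i (c i b)].

Lemma valid_tableP c : reflect (valid_prof (@ld_valid N) (profile_of c)) (valid_table c).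
Proof.
apply: (iffP forallP) => [h i b | h i]; first by move/forallP/(_ b): (h i).
by apply/forallP => b; apply: h.
Qed.

Definition sincere_table (c : ld_table) : bool :=
  valid_table c &&
  [forall i, forall b, if p i is PrefI then true else c i b == sincere_vote (p i)].

Lemma sincere_tableP c : reflect (sincere (profile_of c)) (sincere_table c).
Proof.
apply: (iffP andP) => [[/valid_tableP hv /forallP hs] | [hv hs]].
  split=> // i b; move/forallP/(_ b): (hs i); rewrite /profile_of.
  by case: (p i) => // /eqP.
split; first exact/valid_tableP.
apply/forallP => i; apply/forallP => b; have := hs i b; rewrite /profile_of.
by case: (p i) => // -> //; rewrite eqxx.
Qed.

Definition independent (pr : pref) : bool := if pr is PrefI then true else false.

(* Every strategy of an independent voter is scored by its expected payoff against
   all valid profiles at once; maximising the total score breaks ties between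
   best profiles in favour of undominated strategies. *)
Definition dominance_score i (t : bool -> ldact N) : R :=
  \sum_(c | valid_table c) EU i (upd (profile_of c) i t).

Definition potential (sg : profile N (ldact N)) : R :=
  \sum_(i | independent (p i)) dominance_score i (sg i).

Lemma dominance_score_lt i t t' :
  (forall sg, valid_prof (@ld_valid N) sg -> EU i (upd sg i t) <= EU i (upd sg i t')) ->
  (exists sg, valid_prof (@ld_valid N) sg /\ EU i (upd sg i t) < EU i (upd sg i t')) ->
  dominance_score i t < dominance_score i t'.
Proof.
move=> hle [sg [hsg hlt]]; apply: (ler_sum_lt (i0 := table_of sg)).
- by move=> c /valid_tableP; exact: hle.
- by apply/valid_tableP; rewrite table_ofK.
- by rewrite table_ofK.
Qed.

Lemma potential_lt sg i t : p i = PrefI ->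
  dominance_score i (sg i) < dominance_score i t -> potential sg < potential (upd sg i t).
Proof.
move=> hp hlt; rewrite /potential (bigD1 i) ?hp // [ltRHS](bigD1 i) ?hp //=.
have -> : \sum_(j | independent (p j) && (j != i)) dominance_score j (upd sg i t j) =
          \sum_(j | independent (p j) && (j != i)) dominance_score j (sg j).
  by apply: eq_bigr => j /andP[_ hj]; rewrite /upd (negbTE hj).
by rewrite ltrD2r /upd eqxx.
Qed.

Lemma eu_independent i sg : p i = PrefI -> EU i sg = PC sg.
Proof. by move=> hp; rewrite /eu /pcorrect hp. Qed.

Lemma sincere_upd sg i t :
  sincere sg -> p i = PrefI -> valid_strat (@ld_valid N) i t -> sincere (upd sg i t).
Proof.
move=> [hv hs] hp ht; split=> j b; rewrite /upd; case: eqP => [->|_].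
- exact: ht.
- exact: hv.
- by rewrite hp.
- exact: hs.
Qed.

Lemma sincere_strategy sg i : sincere sg -> p i <> PrefI -> sg i = fun _ => sincere_vote (p i).
Proof. by move=> [_ hs] hp; apply: functional_extensionality => b; exact: hs. Qed.

Lemma exists_best_sincere : exists sg, sincere sg /\
  (forall tau, sincere tau -> PC tau <= PC sg) /\
  (forall tau, sincere tau -> PC tau = PC sg -> potential tau <= potential sg).
Proof.
have sincere0 : sincere_table (table_of (fun i _ => sincere_vote (p i))).
  by apply/sincere_tableP; rewrite table_ofK; split=> [i b|//]; case: (p i).
have [c1 /sincere_tableP s1 max1] := arg_maxP (fun c : ld_table => PC (profile_of c)) sincere0.
pose best_table c := sincere_table c && (PC (profile_of c) == PC (profile_of c1)).
have best_c1 : best_table c1 by rewrite /best_table eqxx andbT; apply/sincere_tableP.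
have [c2 /andP[/sincere_tableP s2 /eqP pc2] max2] :=
  arg_maxP (fun c : ld_table => potential (profile_of c)) best_c1.
exists (profile_of c2); split=> //; split=> [tau htau | tau htau pctau].
  by rewrite pc2 -(table_ofK tau); apply: max1; apply/sincere_tableP; rewrite table_ofK.
rewrite -(table_ofK tau); apply: max2; rewrite /best_table table_ofK pctau pc2 eqxx andbT.
by apply/sincere_tableP; rewrite table_ofK.
Qed.

Let own_ge act i w (hp : p i <> PrefI) (_ : forall j, ld_valid j (act j)) :=
  payoff_sincere_ge R w act i hp.

Lemma best_sincere_BNE sg : sincere sg ->
  (forall tau, sincere tau -> PC tau <= PC sg) -> is_BNE p q pi (@ld_valid N) W sg.
Proof.
move=> hsg hbest; split=> [|i t ht]; first exact: hsg.1.
have [hpI | hpI] : p i <> PrefI \/ p i = PrefI by case: (p i); [left | left | right].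
  rewrite -{2}(upd_id sg i) (sincere_strategy hsg hpI).
  exact: (eu_own_ge hpi hq (own := fun j => sincere_vote (p j)) own_ge hpI hsg.1 ht).
by rewrite !eu_independent //; apply/hbest/sincere_upd.
Qed.

Lemma best_sincere_undominated sg : sincere sg ->
  (forall tau, sincere tau -> PC tau <= PC sg) ->
  (forall tau, sincere tau -> PC tau = PC sg -> potential tau <= potential sg) ->
  forall i, ~ weakly_dominated p q pi (@ld_valid N) W i (sg i).
Proof.
move=> hsg hbest hpot i.
have [hpI | hpI] : p i <> PrefI \/ p i = PrefI by case: (p i); [left | left | right].
  rewrite (sincere_strategy hsg hpI).
  exact: (own_undominated hpi hq (own := fun j => sincere_vote (p j)) own_ge hpI).
move=> [t' [ht' [hle hlt]]]; have hsg' := sincere_upd hsg hpI ht'.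
have pc' : PC (upd sg i t') = PC sg.
  apply/eqP; rewrite eq_le hbest //= -(eu_independent (upd sg i t') hpI) -(eu_independent sg hpI).
  by rewrite -{1}(upd_id sg i); apply: hle; exact: hsg.1.
have := hpot _ hsg' pc'; apply/negP; rewrite -ltNge.
exact/potential_lt/dominance_score_lt.
Qed.

Lemma best_sincere_equilibrium : exists sg,
  is_equilibrium p q pi (@ld_valid N) W sg /\ forall tau, sincere tau -> PC tau <= PC sg.
Proof.
have [sg [hsg [hbest hpot]]] := exists_best_sincere.
exists sg; split=> //; split; first exact: best_sincere_BNE.
exact: best_sincere_undominated.
Qed.

End BestSincereEquilibrium.

Theorem proposition1 (R : realFieldType) (N : nat) (p : 'I_N -> pref)
  (q : 'I_N -> R) (pi : R)
  (hpi : 0 < pi < 1) (hq : forall i, 1 / 2%:R <= q i <= 1) :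
  exists sg : profile N (ldact N),
    is_equilibrium p q pi (@ld_valid N) (@ld_winA R N) sg /\
    (forall tau, is_equilibrium p q pi (@ld_valid N) (@ld_winA R N) tau ->
       pcorrect q pi (@ld_winA R N) tau <= pcorrect q pi (@ld_winA R N) sg) /\
    (forall tau, is_equilibrium p q pi (@dd_valid N) (@ld_winA R N) tau ->
       pcorrect q pi (@ld_winA R N) tau <= pcorrect q pi (@ld_winA R N) sg) /\
    (forall (J : {set 'I_N}) (tau : profile N (rdact N)),
       is_equilibrium p q pi (rd_valid J) (@rd_winA R N) tau ->
       pcorrect q pi (@rd_winA R N) tau <= pcorrect q pi (@ld_winA R N) sg).
Proof.
have [sg [heq hbest]] := best_sincere_equilibrium p hpi hq.
exists sg; split=> //; split; [|split].
- by move=> tau /(ld_equilibrium_sincere hpi hq); apply: hbest.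
- by move=> tau /(dd_equilibrium_sincere hpi hq); apply: hbest.
- move=> J tau htau; have [[hv _] _] := htau.
  by rewrite (rd_pcorrect_ld _ _ hv); apply/hbest/(rd_equilibrium_sincere hpi hq htau).
Qed.
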